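(* Let $\mathcal P$ be a 2-reflex orthostack made of three bricks with canonical contact rectangles and signature $\sqcup_i\sqcap_j$ for some types $i,j\in\{1,2,3,4\}$. Then $\mathcal P$ is guarded by a single horizontal closed face guard which is neither the topmost nor the bottommost horizontal face of $\mathcal P$ (namely, one of the two horizontal faces bordering the middle brick).
   Context: A 2-reflex orthostack is an orthogonal polyhedron with no reflex edge parallel to the vertical ($z$) axis all of whose horizontal cross-sections are simply connected; it is a stack of bricks $B_t=R_t\times[z_{t-1},z_t]$, $t=1,\dots,k$ (bottom to top), $z_0<\dots<z_k$, each $R_t$ an axis-parallel rectangle, $R_t\ne R_{t+1}$. The contact rectangle between $B_t$ and $B_{t+1}$ is $(R_t\cap R_{t+1})\times\{z_t\}$; it is canonical if one of $R_t,R_{t+1}$ is strictly contained in the other and their set difference is connected. The type of a canonical contact rectangle is the number $i\in\{1,2,3,4\}$ of sides of the smaller rectangle not contained in the boundary of the larger one. The contact is denoted $\sqcup_i$ if $R_t\subsetneq R_{t+1}$ and $\sqcap_i$ if $R_{t+1}\subsetneq R_t$. The signature is the sequence of these symbols for $t=1,\dots,k-1$, read bottom to top. A point $x$ is visible to $y$ if segment $xy$ does not meet the exterior of the polyhedron; a closed face guard is a face including its boundary; it guards the polyhedron if every point is visible from some point of it. A face is horizontal if orthogonal to the $z$-axis. *)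

From Stdlib Require Import Reals.
Open Scope R_scope.

Definition pt2 := (R * R)%type.
Definition pt3 := (R * R * R)%type.

Record rect := Rect { rx1 : R; rx2 : R; ry1 : R; ry2 : R }.

Definition valid_rect (r : rect) : Prop := rx1 r < rx2 r /\ ry1 r < ry2 r.

Definition in_rect (r : rect) (p : pt2) : Prop :=
  rx1 r <= fst p <= rx2 r /\ ry1 r <= snd p <= ry2 r.

Definition dist2 (p q : pt2) : R :=
  Rmax (Rabs (fst p - fst q)) (Rabs (snd p - snd q)).

Definition open2 (U : pt2 -> Prop) : Prop :=
  forall p, U p -> exists eps, 0 < eps /\ forall q, dist2 p q < eps -> U q.

Definition closure2 (S : pt2 -> Prop) (p : pt2) : Prop :=
  forall eps, 0 < eps -> exists q, S q /\ dist2 p q < eps.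

Definition connected2 (S : pt2 -> Prop) : Prop :=
  ~ exists U V : pt2 -> Prop,
      open2 U /\ open2 V /\
      (forall p, S p -> U p \/ V p) /\
      (exists p, S p /\ U p) /\ (exists p, S p /\ V p) /\
      (forall p, S p -> U p -> V p -> False).

Definition rect_diff (s r : rect) (p : pt2) : Prop := in_rect s p /\ ~ in_rect r p.

Definition rect_strict_sub (r s : rect) : Prop :=
  (forall p, in_rect r p -> in_rect s p) /\ exists p, in_rect s p /\ ~ in_rect r p.

(** Canonical contacts: [sqcup r s] means R_t = r, R_{t+1} = s with r strictly
    inside s and s \ r connected; [sqcap r s] means s strictly inside r and
    r \ s connected. *)
Definition sqcup (r s : rect) : Prop := rect_strict_sub r s /\ connected2 (rect_diff s r).
Definition sqcap (r s : rect) : Prop := rect_strict_sub s r /\ connected2 (rect_diff r s).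

(** Type of a canonical contact: number of sides of the smaller rectangle [r]
    not contained in the boundary of the larger rectangle [s]. *)
Definition side_free (a b : R) : nat := if Req_EM_T a b then 0%nat else 1%nat.
Definition contact_type (r s : rect) : nat :=
  (side_free (rx1 r) (rx1 s) + side_free (rx2 r) (rx2 s)
   + side_free (ry1 r) (ry1 s) + side_free (ry2 r) (ry2 s))%nat.

(** The three-brick stack B_t = R_t x [z_{t-1}, z_t] (t = 1,2,3), as a closed set. *)
Definition in_brick (r : rect) (za zb : R) (p : pt3) : Prop :=
  let '(x, y, z) := p in in_rect r (x, y) /\ za <= z <= zb.

Definition stack3 (R1 R2 R3 : rect) (z0 z1 z2 z3 : R) (p : pt3) : Prop :=
  in_brick R1 z0 z1 p \/ in_brick R2 z1 z2 p \/ in_brick R3 z2 z3 p.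

(** Segments and visibility: x sees y in P iff the segment xy lies in P
    (i.e. does not meet the exterior of the closed polyhedron P). *)
Definition seg_point (x y : pt3) (l : R) : pt3 :=
  let '(x1, x2, x3) := x in let '(y1, y2, y3) := y in
  (x1 + l * (y1 - x1), x2 + l * (y2 - x2), x3 + l * (y3 - x3)).

Definition visible (P : pt3 -> Prop) (x y : pt3) : Prop :=
  forall l, 0 <= l <= 1 -> P (seg_point x y l).

Definition guards (P : pt3 -> Prop) (G : pt3 -> Prop) : Prop :=
  forall p, P p -> exists g, G g /\ visible P g p.

(** The closed horizontal face at height z between consecutive bricks with
    rectangles r (below) and s (above): the closure of (r symmetric-difference s),
    at height z.  For a canonical contact this is a single face. *)
Definition hface (r s : rect) (z : R) (p : pt3) : Prop :=
  let '(x, y, w) := p in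
  closure2 (fun q => rect_diff r s q \/ rect_diff s r q) (x, y) /\ w = z.

From Stdlib Require Import Reals Lra Lia Classical.
Open Scope R_scope.

(** A point [g] of a guard set sees every point of a convex part
    of the polyhedron containing [g]; so it suffices to cover the stack by
    convex pieces (bricks) lying in it, each meeting the guard face.  Since
    R1 and R3 both lie inside R2, the stack contains, besides its three
    bricks, the "columns" R1 x [z0,z2] and R3 x [z1,z3].  Hence the face
    between B1 and B2 guards as soon as it has a point over R1 (seeing B1 and
    B2) and a point over R3 (seeing B3); symmetrically for the face between
    B2 and B3.  A contact of type >= 1 leaves some side of the small
    rectangle off the boundary of the large one, which yields a face point
    over the small rectangle.  Finally, if R1 is inside R3 the lower face
    works with a single point, and otherwise any point of R1 outside R3 lies
    on the upper face. *)

Definition convex3 (K : pt3 -> Prop) : Prop :=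
  forall x y l, K x -> K y -> 0 <= l <= 1 -> K (seg_point x y l).

Lemma interval_convex (a b u v l : R) :
  a <= u <= b -> a <= v <= b -> 0 <= l <= 1 -> a <= u + l * (v - u) <= b.
Proof. intros; nra. Qed.

Lemma rect_convex (r : rect) (a b d e l : R) :
  in_rect r (a, b) -> in_rect r (d, e) -> 0 <= l <= 1 ->
  in_rect r (a + l * (d - a), b + l * (e - b)).
Proof.
  unfold in_rect; simpl; intros [] [] ?; split; apply interval_convex; auto.
Qed.

Lemma brick_convex (r : rect) (za zb : R) : convex3 (in_brick r za zb).
Proof.
  intros [[x1 x2] x3] [[y1 y2] y3] l [Hx Hzx] [Hy Hzy] Hl; simpl.
  split; [apply rect_convex | apply interval_convex]; auto.
Qed.

Lemma brick_mono (r s : rect) (za zb za' zb' : R) (p : pt3) :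
  (forall q, in_rect r q -> in_rect s q) -> za' <= za -> zb <= zb' ->
  in_brick r za zb p -> in_brick s za' zb' p.
Proof. destruct p as [[x y] z]; intros Hrs ? ? [? ?]; split; auto; lra. Qed.

Lemma brick_split (r : rect) (za zm zb : R) (p : pt3) :
  in_brick r za zb p -> in_brick r za zm p \/ in_brick r zm zb p.
Proof.
  destruct p as [[x y] z]; intros [? ?].
  destruct (Rle_dec z zm); [left | right]; split; auto; lra.
Qed.

Lemma guards_of_convex_cover (P G : pt3 -> Prop) :
  (forall p, P p -> exists K, convex3 K /\ (forall q, K q -> P q) /\ K p /\
                      exists g, G g /\ K g) ->
  guards P G.
Proof.
  intros Hcov p Hp.
  destruct (Hcov p Hp) as (K & Kconv & KP & Kp & g & Gg & Kg).
  exists g; split; auto. intros l Hl; apply KP, Kconv; auto.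
Qed.

Lemma brick_piece (P G : pt3 -> Prop) (r : rect) (za zb : R) (p g : pt3) :
  (forall q, in_brick r za zb q -> P q) -> in_brick r za zb p ->
  G g -> in_brick r za zb g ->
  exists K, convex3 K /\ (forall q, K q -> P q) /\ K p /\ exists g, G g /\ K g.
Proof.
  intros; exists (in_brick r za zb); repeat split; auto using brick_convex.
  eauto.
Qed.

Lemma closure_of_ray (S : pt2 -> Prop) (a b u v delta : R) :
  0 < delta -> -1 <= u <= 1 -> -1 <= v <= 1 ->
  (forall d, 0 < d <= delta -> S (a + d * u, b + d * v)) -> closure2 S (a, b).
Proof.
  intros Hdelta Hu Hv Hray eps Heps.
  set (d := Rmin (eps / 2) delta).
  assert (Hd1 : d <= eps / 2) by apply Rmin_l.
  assert (Hd2 : d <= delta) by apply Rmin_r.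
  assert (Hd : 0 < d) by (apply Rmin_glb_lt; lra).
  exists (a + d * u, b + d * v); split; [apply Hray; lra|].
  unfold dist2; simpl; apply Rmax_lub_lt; apply Rabs_def1; nra.
Qed.

Lemma closure_self (S : pt2 -> Prop) (p : pt2) : S p -> closure2 S p.
Proof.
  intros Hp eps Heps; exists p; split; auto.
  unfold dist2; rewrite !Rminus_diag, Rabs_R0, Rmax_left; lra.
Qed.

Lemma closure_mono (S T : pt2 -> Prop) (p : pt2) :
  (forall q, S q -> T q) -> closure2 S p -> closure2 T p.
Proof. intros HST H eps He; destruct (H eps He) as [q [Hq Hd]]; eauto. Qed.

Lemma contact_type_pos (r s : rect) :
  (1 <= contact_type r s)%nat ->
  rx1 r <> rx1 s \/ rx2 r <> rx2 s \/ ry1 r <> ry1 s \/ ry2 r <> ry2 s.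
Proof.
  unfold contact_type, side_free.
  destruct (Req_EM_T (rx1 r) (rx1 s)), (Req_EM_T (rx2 r) (rx2 s)),
    (Req_EM_T (ry1 r) (ry1 s)), (Req_EM_T (ry2 r) (ry2 s)); simpl;
    intros; tauto || lia.
Qed.

(** If [r] lies inside [s] with a contact of type at least one, a point of
    [r] (a corner on a free side) lies in the closure of [s \ r]. *)
Lemma free_point (r s : rect) :
  valid_rect r -> (forall p, in_rect r p -> in_rect s p) ->
  (1 <= contact_type r s)%nat ->
  exists p, in_rect r p /\ closure2 (rect_diff s r) p.
Proof.
  intros [Hx Hy] Hsub Hc.
  assert (Hlo := Hsub (rx1 r, ry1 r)); assert (Hhi := Hsub (rx2 r, ry2 r)).
  unfold in_rect in Hlo, Hhi; simpl in Hlo, Hhi.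
  destruct Hlo as [[Hlo1 Hlo2] [Hlo3 Hlo4]]; [split; split; lra|].
  destruct Hhi as [[Hhi1 Hhi2] [Hhi3 Hhi4]]; [split; split; lra|].
  unfold rect_diff, in_rect; simpl.
  destruct (contact_type_pos r s Hc) as [H | [H | [H | H]]].
  - exists (rx1 r, ry1 r); simpl; split; [lra|].
    assert (Hgap : rx1 s < rx1 r) by (destruct (Rdichotomy _ _ H); lra).
    apply (closure_of_ray _ _ _ (-1) 0 (rx1 r - rx1 s)); try lra.
    intros d Hd; simpl; lra.
  - exists (rx2 r, ry1 r); simpl; split; [lra|].
    assert (Hgap : rx2 r < rx2 s) by (destruct (Rdichotomy _ _ H); lra).
    apply (closure_of_ray _ _ _ 1 0 (rx2 s - rx2 r)); try lra.
    intros d Hd; simpl; lra.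
  - exists (rx1 r, ry1 r); simpl; split; [lra|].
    assert (Hgap : ry1 s < ry1 r) by (destruct (Rdichotomy _ _ H); lra).
    apply (closure_of_ray _ _ _ 0 (-1) (ry1 r - ry1 s)); try lra.
    intros d Hd; simpl; lra.
  - exists (rx1 r, ry2 r); simpl; split; [lra|].
    assert (Hgap : ry2 r < ry2 s) by (destruct (Rdichotomy _ _ H); lra).
    apply (closure_of_ray _ _ _ 0 1 (ry2 s - ry2 r)); try lra.
    intros d Hd; simpl; lra.
Qed.

Section NestedStack.

Variables (R1 R2 R3 : rect) (z0 z1 z2 z3 : R).
Hypotheses (hz01 : z0 < z1) (hz12 : z1 < z2) (hz23 : z2 < z3).
Hypothesis (sub12 : forall p, in_rect R1 p -> in_rect R2 p).
Hypothesis (sub32 : forall p, in_rect R3 p -> in_rect R2 p).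

Let P := stack3 R1 R2 R3 z0 z1 z2 z3.

Lemma column_low (p : pt3) : in_brick R1 z0 z2 p -> P p.
Proof.
  intros Hp; destruct (brick_split _ _ z1 _ _ Hp) as [H | H].
  - now left.
  - right; left; apply (brick_mono R1 R2 z1 z2); auto; lra.
Qed.

Lemma column_high (p : pt3) : in_brick R3 z1 z3 p -> P p.
Proof.
  intros Hp; destruct (brick_split _ _ z2 _ _ Hp) as [H | H].
  - right; left; apply (brick_mono R3 R2 z1 z2); auto; lra.
  - now right; right.
Qed.

Lemma brick2_in_stack (p : pt3) : in_brick R2 z1 z2 p -> P p.
Proof. now right; left. Qed.

Lemma brick3_in_stack (p : pt3) : in_brick R3 z2 z3 p -> P p.
Proof. now right; right. Qed.

Lemma lower_face_guards (g1 g3 : pt2) :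
  in_rect R1 g1 -> hface R1 R2 z1 (fst g1, snd g1, z1) ->
  in_rect R3 g3 -> hface R1 R2 z1 (fst g3, snd g3, z1) ->
  guards P (hface R1 R2 z1).
Proof.
  destruct g1 as [x1 y1], g3 as [x3 y3]; intros G1 F1 G3 F3.
  apply guards_of_convex_cover; intros p [Hp | [Hp | Hp]].
  - apply (brick_piece _ _ R1 z0 z2 p (x1, y1, z1)); auto using column_low.
    + apply (brick_mono R1 R1 z0 z1); auto; lra.
    + split; auto; lra.
  - apply (brick_piece _ _ R2 z1 z2 p (x1, y1, z1)); auto using brick2_in_stack.
    split; auto; lra.
  - apply (brick_piece _ _ R3 z1 z3 p (x3, y3, z1)); auto using column_high.
    + apply (brick_mono R3 R3 z2 z3); auto; lra.
    + split; auto; lra.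
Qed.

Lemma upper_face_guards (g1 g3 : pt2) :
  in_rect R1 g1 -> hface R2 R3 z2 (fst g1, snd g1, z2) ->
  in_rect R3 g3 -> hface R2 R3 z2 (fst g3, snd g3, z2) ->
  guards P (hface R2 R3 z2).
Proof.
  destruct g1 as [x1 y1], g3 as [x3 y3]; intros G1 F1 G3 F3.
  apply guards_of_convex_cover; intros p [Hp | [Hp | Hp]].
  - apply (brick_piece _ _ R1 z0 z2 p (x1, y1, z2)); auto using column_low.
    + apply (brick_mono R1 R1 z0 z1); auto; lra.
    + split; auto; lra.
  - apply (brick_piece _ _ R2 z1 z2 p (x3, y3, z2)); auto using brick2_in_stack.
    split; auto; lra.
  - apply (brick_piece _ _ R3 z2 z3 p (x3, y3, z2)); auto using brick3_in_stack.
    split; auto; lra.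
Qed.

End NestedStack.

Lemma face_of_upper_excess (r s : rect) (z : R) (g : pt2) :
  closure2 (rect_diff s r) g -> hface r s z (fst g, snd g, z).
Proof. intros H; split; auto; eapply closure_mono; [|exact H]; auto. Qed.

Lemma face_of_lower_excess (r s : rect) (z : R) (g : pt2) :
  closure2 (rect_diff r s) g -> hface r s z (fst g, snd g, z).
Proof. intros H; split; auto; eapply closure_mono; [|exact H]; auto. Qed.

Theorem mainTheorem9 (R1 R2 R3 : rect) (z0 z1 z2 z3 : R) (i j : nat)
  (hR1 : valid_rect R1) (hR2 : valid_rect R2) (hR3 : valid_rect R3)
  (hz01 : z0 < z1) (hz12 : z1 < z2) (hz23 : z2 < z3)
  (hc1 : sqcup R1 R2) (hc2 : sqcap R2 R3)
  (hi : (1 <= i <= 4)%nat) (hj : (1 <= j <= 4)%nat)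
  (hti : contact_type R1 R2 = i) (htj : contact_type R3 R2 = j) :
  guards (stack3 R1 R2 R3 z0 z1 z2 z3) (hface R1 R2 z1) \/
  guards (stack3 R1 R2 R3 z0 z1 z2 z3) (hface R2 R3 z2).
Proof.
  destruct hc1 as [[sub12 _] _], hc2 as [[sub32 _] _].
  destruct (free_point R1 R2 hR1 sub12 ltac:(lia)) as [g1 [G1 F1]].
  destruct (free_point R3 R2 hR3 sub32 ltac:(lia)) as [g3 [G3 F3]].
  destruct (classic (forall p, in_rect R1 p -> in_rect R3 p)) as [sub13 | Hnot].
  - (* R1 inside R3: the free point of R1 serves for both bricks B1 and B3. *)
    left; apply (lower_face_guards _ _ _ z0 z1 z2 z3 hz01 hz12 hz23 sub12 sub32
                   g1 g1); auto using face_of_upper_excess.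
  - (* A point of R1 outside R3 lies on the upper face. *)
    apply not_all_ex_not in Hnot as [q Hq].
    apply imply_to_and in Hq as [Q1 Q3].
    right; apply (upper_face_guards _ _ _ z0 z1 z2 z3 hz01 hz12 hz23 sub12 sub32
                    q g3); auto using face_of_lower_excess.
    apply face_of_lower_excess, closure_self; split; auto.
Qed.
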